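(* Let $X$ be a locally compact separable metrizable space and $Z\subseteq X$ compact. Every abstract good coordinate system of $Z$ in the weak sense has a shrinking (which is again an abstract good coordinate system of $Z$ in the weak sense).
   Context: An abstract K-chart of $X$ is a triple $(U,S,\psi)$ where $U$ is a locally compact separable metrizable space, $S\subseteq U$ is closed, and $\psi:S\to X$ is a homeomorphism onto an open subset of $X$. Given abstract K-charts $\mathcal U_i=(U_i,S_i,\psi_i)$ ($i=1,2$), a coordinate change from $\mathcal U_1$ to $\mathcal U_2$ is a pair $(U_{21},\varphi_{21})$ with: (1) $U_{21}\subseteq U_1$ open; (2) $\varphi_{21}:U_{21}\to U_2$ a topological embedding; (3) $S_1\cap U_{21}=\varphi_{21}^{-1}(S_2)$ and $\psi_2\circ\varphi_{21}=\psi_1$ on $S_1\cap U_{21}$; (4) $\psi_1(S_1\cap U_{21})=\psi_1(S_1)\cap\psi_2(S_2)$. An abstract good coordinate system of $Z$ in the weak sense is $(\mathfrak P,\{\mathcal U_{\mathfrak p}\},\{\Phi_{\mathfrak p\mathfrak q}\})$ where: (1) $\mathfrak P$ is a finite partially ordered set; (2) each $\mathcal U_{\mathfrak p}=(U_{\mathfrak p},S_{\mathfrak p},\psi_{\mathfrak p})$ is an abstract K-chart; (3) for $\mathfrak q\le\mathfrak p$, $\Phi_{\mathfrak p\mathfrak q}=(U_{\mathfrak p\mathfrak q},\varphi_{\mathfrak p\mathfrak q})$ is a coordinate change from $\mathcal U_{\mathfrak q}$ to $\mathcal U_{\mathfrak p}$, with $U_{\mathfrak p\mathfrak p}=U_{\mathfrak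 p}$ and $\varphi_{\mathfrak p\mathfrak p}=\mathrm{id}$; (4) if $\mathfrak r\le\mathfrak q\le\mathfrak p$ then $\varphi_{\mathfrak p\mathfrak r}=\varphi_{\mathfrak p\mathfrak q}\circ\varphi_{\mathfrak q\mathfrak r}$ on $\varphi_{\mathfrak q\mathfrak r}^{-1}(U_{\mathfrak p\mathfrak q})\cap U_{\mathfrak p\mathfrak r}$; (5) if $\psi_{\mathfrak p}(S_{\mathfrak p})\cap\psi_{\mathfrak q}(S_{\mathfrak q})\neq\emptyset$ then $\mathfrak p\le\mathfrak q$ or $\mathfrak q\le\mathfrak p$; (6) $\bigcup_{\mathfrak p}\psi_{\mathfrak p}(S_{\mathfrak p})\supseteq Z$. For an open subset $V$ of a separable metrizable space $U$, write $V\Subset U$ if the closure of $V$ in $U$ is compact. For an abstract K-chart $\mathcal U=(U,S,\psi)$ and open $U_0\subseteq U$, $\mathcal U|_{U_0}=(U_0,S\cap U_0,\psi|_{S\cap U_0})$; it is a shrinking of $\mathcal U$ if $U_0\Subset U$. An abstract good coordinate system $(\mathfrak P,\{\mathcal U^0_{\mathfrak p}\},\{\Phi^0_{\mathfrak p\mathfrak q}\})$ of $Z$ in the weak sense (same $\mathfrak P$) is a shrinking of $(\mathfrak P,\{\mathcal U_{\mathfrak p}\},\{\Phi_{\mathfrak p\mathfrak q}\})$ if each $\mathcal U^0_{\mathfrak p}$ is a shrinking of $\mathcal U_{\mathfrak p}$, and for $\mathfrak q\le\mathfrak p$ the domain of $\Phi^0_{\mathfrak p\mathfrak q}$ is an open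 set $\Subset U_{\mathfrak p\mathfrak q}$ and $\varphi^0_{\mathfrak p\mathfrak q}$ is the restriction of $\varphi_{\mathfrak p\mathfrak q}$ to it. *)

From HB Require Import structures.
From mathcomp Require Import all_boot all_order all_algebra.
From mathcomp Require Import all_classical all_reals all_analysis.
From mathcomp Require Import Rstruct Rstruct_topology.

Set Implicit Arguments.
Unset Strict Implicit.
Unset Printing Implicit Defensive.

Import Order.TTheory GRing.Theory Num.Theory.
Local Open Scope classical_set_scope.
Local Open Scope ring_scope.

Definition metrizable (T : topologicalType) : Prop :=
  exists d : T -> T -> Rdefinitions.R,
    [/\ (forall x y, d x y = 0 <-> x = y),
        (forall x y, d x y = d y x),
        (forall x y z, d x z <= d x y + d y z) &
        (forall A : set T, open A <->
           (forall x, A x -> exists e : Rdefinitions.R, 0 < e /\ [set y | d x y < e] `<=` A))].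

Definition separable (T : topologicalType) : Prop :=
  exists D : set T, countable D /\ dense D.

Definition lcsm (T : topologicalType) : Prop :=
  [/\ locally_compact [set: T], separable T & metrizable T].

(** Subsets [A] of [T] carry the subspace topology via the sigma type
    [set_type A] (MathComp-Analysis, subtype_topology.v). *)
Definition sub_open (T : topologicalType) (U A : set T) : Prop :=
  A `<=` U /\ open [set x : set_type U | A (val x)].

Definition sub_closed (T : topologicalType) (U A : set T) : Prop :=
  A `<=` U /\ closed [set x : set_type U | A (val x)].

Definition relcompact_in (T : topologicalType) (U V : set T) : Prop :=
  V `<=` U /\ compact (closure [set x : set_type U | V (val x)]).

Definition embedding_on (U V : topologicalType) (A : set U) (f : U -> V)
  : Prop :=
  [/\ {within A, continuous f},
      {in A &, injective f} &
      (forall W : set U, open W ->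
         exists W' : set V, open W' /\ f @` (W `&` A) = W' `&` f @` A)].

(** The chart space of a chart is represented as a subset [U] of an
    ambient topological type [T], equipped with the subspace topology
    (for the given system, [U = setT], i.e. the space is [T] itself; for
    a shrinking it is an open subset [U0] of [T]).  The chart is
    [(U, S, psi)]; [psi] is a total function of which only the values
    on [S] matter. *)
Definition is_Kchart (X T : topologicalType) (U S : set T) (psi : T -> X)
  : Prop :=
  [/\ lcsm (set_type U),
      sub_closed U S,
      embedding_on S psi &
      open (psi @` S)].

(** [(U21, phi21)] is a coordinate change from the chart
    [(U1,S1,psi1)] to the chart [(U2,S2,psi2)]; only the values of
    [phi21] on [U21] matter. *)
Definition is_coord_change (X T1 T2 : topologicalType)
  (U1 S1 : set T1) (psi1 : T1 -> X) (U2 S2 : set T2) (psi2 : T2 -> X)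
  (U21 : set T1) (phi21 : T1 -> T2) : Prop :=
  [/\ sub_open U1 U21,
      phi21 @` U21 `<=` U2 /\ embedding_on U21 phi21,
      S1 `&` U21 = U21 `&` phi21 @^-1` S2,
      (forall x, (S1 `&` U21) x -> psi2 (phi21 x) = psi1 x) &
      psi1 @` (S1 `&` U21) = psi1 @` S1 `&` psi2 @` S2].

Definition is_weak_gcs (X : topologicalType) (Z : set X)
  (d : Order.disp_t) (P : finPOrderType d)
  (T : P -> topologicalType)
  (Ud : forall p, set (T p)) (S : forall p, set (T p))
  (psi : forall p, T p -> X)
  (Uc : forall p q : P, set (T q)) (phi : forall p q : P, T q -> T p) : Prop :=
  [/\ (forall p, is_Kchart (Ud p) (S p) (psi p)) /\
      (forall p q : P, (q <= p)%O ->
         is_coord_change (Ud q) (S q) (psi q) (Ud p) (S p) (psi p)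
                         (Uc p q) (phi p q)),
      (forall p, Uc p p = Ud p /\ (forall x, Ud p x -> phi p p x = x)),
      (forall p q r : P, (r <= q)%O -> (q <= p)%O ->
         forall x, Uc q r x -> Uc p q (phi q r x) -> Uc p r x ->
           phi p r x = phi p q (phi q r x)),
      (forall p q : P, psi p @` S p `&` psi q @` S q !=set0 ->
         (p <= q)%O \/ (q <= p)%O) &
      Z `<=` \bigcup_p (psi p @` S p)].

Definition is_shrinking (X : topologicalType) (Z : set X)
  (d : Order.disp_t) (P : finPOrderType d)
  (T : P -> topologicalType) (S : forall p, set (T p))
  (psi : forall p, T p -> X)
  (Uc : forall p q : P, set (T q)) (phi : forall p q : P, T q -> T p)
  (U0 : forall p, set (T p)) (D0 : forall p q : P, set (T q)) : Prop :=
  [/\ (forall p, open (U0 p) /\ relcompact_in setT (U0 p)),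
      (forall p q : P, (q <= p)%O ->
         open (D0 p q) /\ relcompact_in (Uc p q) (D0 p q)) &
      is_weak_gcs Z U0 (fun p => S p `&` U0 p) psi D0 phi].

From HB Require Import structures.
From mathcomp Require Import all_boot all_order all_algebra.
From mathcomp Require Import all_classical all_reals all_analysis.
From mathcomp Require Import Rstruct lra finmap.

(* Chart spaces are locally compact and metrizable, so every point has a
   relatively compact open neighbourhood.  Covering the compact set [Z] by the
   images of such neighbourhoods and keeping finitely many of them yields
   relatively compact open [U0 p] whose charts still cover [Z].  For [q < p],
   the points of [S q ∩ cl (U0 q)] mapped into [psi p (S p ∩ cl (U0 p))] form
   a compact set, contained in the domain [Uc p q] of the coordinate change by
   its condition (4); so it has a relatively compact open neighbourhood
   [W p q] in [Uc p q].  The new domain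
   [U0 q ∩ Uc p q ∩ (phi p q)^-1 (U0 p) ∩ W p q] is then relatively compact in
   [Uc p q] and still contains every point where the shrunken charts overlap,
   which is all the coordinate-change axioms ask for. *)

Set Implicit Arguments.
Unset Strict Implicit.
Unset Printing Implicit Defensive.
Import Order.TTheory GRing.Theory Num.Theory.
Local Open Scope classical_set_scope.

Lemma closure_sub_closed (T : topologicalType) (A C : set T) :
  closed C -> A `<=` C -> closure A `<=` C.
Proof. by move=> cC AC x /(closureS AC); rewrite -(closure_id C).1. Qed.

Section Subspace.
Context {T : topologicalType} (U : set T).

Lemma subspace_openP (B : set (set_type U)) :
  open B -> exists2 W : set T, open W & B = set_val @^-1` W.
Proof. by move=> [W oW <-]; exists W. Qed.

Lemma open_set_val_preimage (W : set T) :
  open W -> open (set_val @^-1` W : set (set_type U)).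
Proof. by move=> oW; exists W. Qed.

Lemma closed_set_val_preimage (C : set T) :
  closed C -> closed (set_val @^-1` C : set (set_type U)).
Proof. by move=> cC; apply: preimage_closed => // x _; exact: initial_continuous. Qed.

Lemma nbhs_set_val (x : set_type U) (B : set (set_type U)) : nbhs x B ->
  exists W : set T, [/\ open W, W (set_val x) & set_val @^-1` W `<=` B].
Proof. by rewrite nbhsE => -[_ [/subspace_openP[W oW ->] Wx] WB]; exists W. Qed.

Lemma compact_set_val_preimage (C : set T) : compact C -> C `<=` U ->
  compact (set_val @^-1` C : set (set_type U)).
Proof.
move=> cC CU F PF FC.
have [p [Cp clp]] := cC _ (fmap_proper_filter set_val PF) FC.
exists (exist _ p (mem_set (CU p Cp))); split => //.
move=> A B FA /nbhs_set_val[W [oW Wp WB]].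
have FvA : F (set_val @^-1` (set_val @` A)) by apply: filterS FA => a Aa; exists a.
have [_ [[a Aa <-] Wa]] := clp _ _ FvA (open_nbhs_nbhs (conj oW Wp)).
by exists a; split => //; exact: WB.
Qed.

Lemma compact_set_val_image (B : set (set_type U)) :
  compact B -> compact (set_val @` B).
Proof.
by apply: continuous_compact; apply: continuous_subspaceT; exact: initial_continuous.
Qed.

End Subspace.

Section Metric.
Local Open Scope ring_scope.

Definition is_metric (T : topologicalType) (d : T -> T -> Rdefinitions.R) : Prop :=
  [/\ (forall x y, d x y = 0 <-> x = y),
      (forall x y, d x y = d y x),
      (forall x y z, d x z <= d x y + d y z) &
      (forall A : set T, open A <->
         (forall x, A x -> exists e : Rdefinitions.R,
            0 < e /\ [set y | d x y < e] `<=` A))].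

Context {T : topologicalType} (d : T -> T -> Rdefinitions.R) (hd : is_metric d).

Lemma metric_ge0 x y : 0 <= d x y.
Proof.
case: hd => d0 ds dt _.
by have := dt x y x; rewrite (proj2 (d0 x x) erefl) (ds y x); lra.
Qed.

Lemma metric_ball_open x e : open [set y | d x y < e].
Proof.
case: hd => _ _ dt op; apply/op => y /= hy.
exists (e - d x y); split; first lra.
by move=> z /= hz; have := dt x y z; lra.
Qed.

Lemma metric_ball_center x e : 0 < e -> d x x < e.
Proof. by case: hd => d0 _ _ _; rewrite (proj2 (d0 x x) erefl). Qed.

Lemma metric_cball_closed x e : closed [set y | d x y <= e].
Proof.
case: hd => _ ds dt op.
rewrite -[X in closed X]setCK; apply: open_closedC; apply/op => y /= hy.
have hy' : e < d x y by rewrite ltNge; apply/negP.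
exists (d x y - e); split; first lra.
move=> z /= hz; apply/negP; rewrite -ltNge.
by have := dt x z y; rewrite (ds z y); lra.
Qed.

Lemma metric_ball_sub (A : set T) x : open A -> A x ->
  exists e, 0 < e /\ [set y | d x y < e] `<=` A.
Proof. by case: hd => _ _ _ op /op; apply. Qed.

Lemma metric_hausdorff : hausdorff_space T.
Proof.
move=> p q hc; apply: contrapT => npq.
have hpq : 0 < d p q.
  rewrite lt_def metric_ge0 andbT; apply/eqP => h.
  by apply: npq; case: hd => d0 _ _ _; exact/d0.
have ball_nbhs x : nbhs x [set y | d x y < d p q / 2].
  apply: open_nbhs_nbhs; split; first exact: metric_ball_open.
  by apply: metric_ball_center; lra.
have [z [/= hpz hqz]] := hc _ _ (ball_nbhs p) (ball_nbhs q).
by case: hd => _ ds dt _; have := dt p z q; rewrite (ds z q); lra.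
Qed.

End Metric.

Lemma metrizable_hausdorff (T : topologicalType) : metrizable T -> hausdorff_space T.
Proof. by case=> d; exact: metric_hausdorff. Qed.

Definition relcompact_open (T : topologicalType) (O W : set T) : Prop :=
  [/\ open W, compact (closure W) & closure W `<=` O].

Definition locally_relcompact (T : topologicalType) : Prop :=
  forall (O : set T) x, open O -> O x -> exists2 V, V x & relcompact_open O V.

Lemma metric_locally_relcompact (T : topologicalType) (d : T -> T -> Rdefinitions.R) :
  is_metric d ->
  (forall x : T, exists W C, [/\ open W, W x, compact C & W `<=` C]) ->
  locally_relcompact T.
Proof.
move=> hd lc O x oO Ox.
have [W [C [oW Wx cC WC]]] := lc x.
have [e [e0 he]] := metric_ball_sub hd (openI oO oW) (conj Ox Wx).
pose B := [set y | (d x y < e / 2)%R].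
have clB : closure B `<=` [set y | (d x y < e)%R].
  have Bcball : B `<=` [set y | (d x y <= e / 2)%R] by move=> z /ltW.
  have clBcball := closure_sub_closed (metric_cball_closed hd (x:=x) (e:=(e / 2)%R)).
  by move=> y /(clBcball _ Bcball) /=; lra.
exists B; first by apply: (metric_ball_center hd); lra.
split; first exact: (metric_ball_open hd).
- apply: (subclosed_compact (@closed_closure _ _) cC).
  by move=> y /clB /he [] _ /WC.
- by move=> y /clB /he [].
Qed.

Section WholeSubspace.
Context {T : topologicalType}.
Local Notation T' := (set_type [set: T]).

Definition to_setT (x : T) : T' := exist _ x (mem_set (I : [set: T] x)).

Lemma to_setTK : cancel set_val to_setT.
Proof. by move=> y; apply/val_inj. Qed.

Lemma open_setT_preimage (A : set T) : open (set_val @^-1` A : set T') -> open A.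
Proof.
move=> /subspace_openP[W oW E].
by rewrite -[A]/(fun x => (set_val @^-1` A) (to_setT x)) E.
Qed.

Lemma closed_setT_preimage (A : set T) : closed (set_val @^-1` A : set T') -> closed A.
Proof.
move=> cA; rewrite -[A]setCK; apply/open_closedC/open_setT_preimage.
exact: closed_openC.
Qed.

Lemma metrizable_setT : metrizable T' -> metrizable T.
Proof.
case=> d [d0 ds dt op]; exists (fun x y => d (to_setT x) (to_setT y)); split.
- move=> x y; rewrite d0; split=> [/(congr1 set_val)//|->//].
- by move=> x y; rewrite ds.
- by move=> x y z; rewrite dt.
- move=> A; split=> [oA x Ax|hA].
    have /op/(_ (to_setT x) Ax)[e [e0 he]] := open_set_val_preimage [set: T] oA.
    by exists e; split => // y hy; exact: (he (to_setT y)).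
  apply: open_setT_preimage; apply/op => x Ax.
  have [e [e0 he]] := hA _ Ax.
  by exists e; split => // y hy; apply: he; rewrite /= !to_setTK.
Qed.

Lemma separable_setT : separable T' -> separable T.
Proof.
case=> D [cD dD]; exists (set_val @` D); split.
- move: cD => /pcard_injP[f finj]; apply/pcard_injP.
  exists (fun y => f (to_setT y)) => y1 y2 /[!in_setE] -[a Da <-] -[b Db <-].
  by rewrite !to_setTK => /(finj a b); rewrite !in_setE => /(_ Da Db) ->.
- move=> O [x Ox] oO.
  have [|a [Oa Da]] := dD _ _ (open_set_val_preimage [set: T] oO).
    by exists (to_setT x).
  by exists (set_val a); split => //; exists a.
Qed.

Lemma locally_compact_setT : locally_compact [set: T'] ->
  forall x : T, exists W C, [/\ open W, W x, compact C & W `<=` C].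
Proof.
move=> lc x; have [K hK [cK _]] := lc (to_setT x) I.
have nK : nbhs (to_setT x) K by move: hK; rewrite withinET.
have [W [oW Wx WK]] := nbhs_set_val nK.
exists W, (set_val @` K); split => //; first exact: compact_set_val_image.
by move=> y Wy; exists (to_setT y) => //; exact: WK.
Qed.

Lemma lcsm_setT : lcsm T' -> [/\ locally_relcompact T, metrizable T & separable T].
Proof.
case=> /locally_compact_setT lc /separable_setT sep /metrizable_setT met.
by split=> //; case: met => d hd; exact: metric_locally_relcompact hd lc.
Qed.

End WholeSubspace.

Section OpenSubspace.
Context {T : topologicalType} (U : set T).
Hypothesis oU : open U.

Lemma locally_compact_open_subspace :
  locally_relcompact T -> locally_compact [set: set_type U].
Proof.
move=> lr x _; have [V Vx [oV cV VU]] := lr U (set_val x) oU (set_valP x).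
exists (set_val @^-1` closure V).
  have : nbhs x (set_val @^-1` V : set (set_type U)).
    by apply: open_nbhs_nbhs; split => //; exact: open_set_val_preimage.
  by apply: filterS => y Vy _; exact: subset_closure.
split; first exact: compact_set_val_preimage.
exact: closed_set_val_preimage (@closed_closure _ V).
Qed.

Lemma separable_open_subspace : separable T -> separable (set_type U).
Proof.
case=> D [cD dD]; exists (set_val @^-1` D); split.
- move: cD => /pcard_injP[f finj]; apply/pcard_injP.
  exists (fun y => f (set_val y)) => a b /[!in_setE] Da Db /(finj _ _).
  by rewrite !in_setE => /(_ Da Db) /val_inj.
- move=> O [y Oy] /subspace_openP[W oW E]; subst O.
  have [|z [[Wz Uz] Dz]] := dD (W `&` U) _ (openI oW oU).
    by exists (set_val y); split => //; exact: set_valP.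
  by exists (exist _ z (mem_set Uz)).
Qed.

Lemma metrizable_open_subspace : metrizable T -> metrizable (set_type U).
Proof.
case=> d [d0 ds dt op]; exists (fun a b => d (set_val a) (set_val b)); split.
- by move=> a b; rewrite d0; split=> [/val_inj|->].
- by move=> a b; rewrite ds.
- by move=> a b c; rewrite dt.
- move=> B; split=> [/subspace_openP[W oW ->] a Wa|hB].
    have [e [e0 he]] := (proj1 (op W) oW) _ Wa.
    by exists e; split => // b hb; exact: he.
  have -> : B = set_val @^-1` (set_val @` B).
    by apply/seteqP; split=> [a Ba|a [b Bb /val_inj <-//]]; exists a.
  apply: open_set_val_preimage; apply/op => _ [b Bb <-].
  have [e1 [e10 he1]] := hB b Bb.
  have [e2 [e20 he2]] := (proj1 (op U) oU) _ (set_valP b).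
  exists (Num.min e1 e2); split=> [|z /= hz]; first by rewrite lt_min e10.
  have Uz : U z by apply: he2; rewrite /=; move: hz; rewrite lt_min => /andP[].
  exists (exist _ z (mem_set Uz)) => //.
  by apply: he1; rewrite /=; move: hz; rewrite lt_min => /andP[].
Qed.

End OpenSubspace.

Lemma lcsm_open_subspace (T : topologicalType) (U : set T) :
  lcsm (set_type [set: T]) -> open U -> lcsm (set_type U).
Proof.
move=> /lcsm_setT[lr met sep] oU; split.
- exact: locally_compact_open_subspace.
- exact: separable_open_subspace.
- exact: metrizable_open_subspace.
Qed.

(* [compact_cover] is stated for pointed spaces; any point of [K] will do. *)
Definition pointed_at (T : topologicalType) (x : T) : Type := T.
HB.instance Definition _ (T : topologicalType) (x : T) :=
  Topological.copy (pointed_at x) T.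
HB.instance Definition _ (T : topologicalType) (x : T) :=
  isPointed.Build (pointed_at x) x.

Lemma compact_finite_subcover (T : topologicalType) (K : set T)
    (I : choiceType) (f : I -> set T) :
  compact K -> (forall i, open (f i)) -> K `<=` \bigcup_i f i ->
  exists D : {fset I}, K `<=` \bigcup_(i in [set` D]) f i.
Proof.
move=> cK oF Kf; have [[x Kx]|nK] := pselect (K !=set0); last first.
  by exists fset0 => y Ky; case: nK; exists y.
have : @compact (pointed_at x) K by [].
rewrite compact_cover => /(_ I setT f (fun i _ => oF i) Kf)[D _ KD].
by exists D.
Qed.

Section RelCompact.
Context {T : topologicalType}.
Implicit Types O V W K : set T.

Lemma relcompact_open0 O : relcompact_open O set0.
Proof. by split; rewrite ?closure0//; [exact: open0 | exact: compact0]. Qed.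

Lemma relcompact_openU O V W :
  relcompact_open O V -> relcompact_open O W -> relcompact_open O (V `|` W).
Proof.
case=> oV cV VO [oW cW WO]; split; rewrite ?closureU; first exact: openU.
- exact: compactU.
- by move=> x [/VO|/WO].
Qed.

Lemma relcompact_open_bigcup O (I : choiceType) (D : {fset I}) (f : I -> set T) :
  (forall i, relcompact_open O (f i)) ->
  relcompact_open O (\bigcup_(i in [set` D]) f i).
Proof.
move=> rcf; rewrite bigcup_fset; elim/big_ind: _ => //.
- exact: relcompact_open0.
- exact: relcompact_openU.
Qed.

Lemma relcompact_openS O V W :
  open W -> W `<=` V -> relcompact_open O V -> relcompact_open O W.
Proof.
move=> oW WV [_ cV VO]; have clWV := closureS WV.
split=> //; last exact: subset_trans clWV VO.
exact: subclosed_compact (@closed_closure _ _) cV clWV.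
Qed.

Lemma relcompact_in_open (U V : set T) : relcompact_open U V -> relcompact_in U V.
Proof.
case=> _ cV VU; have VsubU := subset_trans (@subset_closure _ V) VU.
split=> //.
apply: (subclosed_compact (@closed_closure _ _) (compact_set_val_preimage cV VU)).
apply: closure_sub_closed; first exact: closed_set_val_preimage (@closed_closure _ V).
by move=> x Vx; exact: subset_closure.
Qed.

Lemma compact_relcompact_open_superset K O : locally_relcompact T ->
  compact K -> open O -> K `<=` O -> exists2 W, K `<=` W & relcompact_open O W.
Proof.
move=> lr cK oO KO.
have hV x : {V | relcompact_open O V /\ (K x -> V x)}.
  apply: cid; have [Kx|nKx] := pselect (K x); last first.
    by exists set0; split=> [|/nKx//]; exact: relcompact_open0.
  by have [V Vx rcV] := lr O x oO (KO x Kx); exists V.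
pose V x := sval (hV x).
have rcV x : relcompact_open O (V x) by case: (svalP (hV x)).
have [x|x Kx|D KD] := compact_finite_subcover cK (f := V).
- by case: (rcV x).
- by exists x => //; case: (svalP (hV x)) => _; apply.
- by exists (\bigcup_(x in [set` D]) V x) => //; exact: relcompact_open_bigcup.
Qed.

End RelCompact.

Section WithinContinuous.
Context {T V : topologicalType} (A : set T) (f : T -> V).
Hypothesis cf : {within A, continuous f}.

Lemma open_within_preimage (O : set V) :
  open A -> open O -> open (A `&` f @^-1` O).
Proof.
move=> oA; move: cf; rewrite continuous_open_subspace // => cfA.
exact: (continuous_inP _ oA).1 cfA O.
Qed.

Lemma compact_within_preimage (C : set V) :
  compact A -> closed C -> compact (A `&` f @^-1` C).
Proof.
move=> cA cC F PF FAC.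
have [p [Ap clp]] := cA F PF (filterS (@subIsetl _ A _) FAC).
exists p; split=> //; split=> //; apply: cC => B nB.
have /= := (subspace_continuousP A f).1 cf p Ap B nB.
rewrite /within /= => N.
have [y [[Ay Cy] Ny]] := clp _ _ FAC N.
by exists (f y); split => //; exact: Ny.
Qed.

End WithinContinuous.

Lemma embedding_onS (T V : topologicalType) (A B : set T) (f : T -> V) :
  B `<=` A -> embedding_on A f -> embedding_on B f.
Proof.
move=> BA [cf injf openf]; split.
- exact: continuous_subspaceW cf.
- by move=> x y /set_mem/BA/mem_set xA /set_mem/BA/mem_set yA; exact: injf.
- move=> W oW; have [W' [oW' E]] := openf W oW.
  exists W'; split => //; apply/seteqP; split.
  + move=> _ [x [Wx Bx] <-]; split; last by exists x.
    have : (f @` (W `&` A)) (f x) by exists x => //; split => //; exact: BA.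
    by rewrite E => -[].
  + move=> y [W'y [b Bb fb]]; rewrite -fb in W'y *.
    have : (W' `&` f @` A) (f b) by split => //; exists b => //; exact: BA.
    rewrite -E => -[c [Wc Ac] fcb].
    have cb : c = b by apply: injf => //; apply/mem_set => //; exact: BA.
    by exists b => //; split => //; rewrite -cb.
Qed.

Section Kchart.
Context {X T : topologicalType} (U S : set T) (psi : T -> X).
Hypothesis chart : is_Kchart U S psi.

Lemma Kchart_inj x y : S x -> S y -> psi x = psi y -> x = y.
Proof. by case: chart => _ _ [_ injpsi _] _ Sx Sy; apply: injpsi; exact: mem_set. Qed.

Lemma Kchart_continuous : {within S, continuous psi}.
Proof. by case: chart => _ _ []. Qed.

Lemma Kchart_image_open (V : set T) : open V -> open (psi @` (S `&` V)).
Proof.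
case: chart => _ _ [_ _ openpsi] oS oV; have [W [oW E]] := openpsi V oV.
by rewrite setIC E; exact: openI.
Qed.

End Kchart.

Lemma Kchart_setT_closed (X T : topologicalType) (S : set T) (psi : T -> X) :
  is_Kchart [set: T] S psi -> closed S.
Proof. by case=> _ [_ cS] _ _; exact: closed_setT_preimage. Qed.

Lemma is_Kchart_restrict (X T : topologicalType) (S : set T) (psi : T -> X)
    (U0 : set T) :
  is_Kchart [set: T] S psi -> open U0 -> is_Kchart U0 (S `&` U0) psi.
Proof.
move=> chart oU0; have [lc _ emb _] := chart; split.
- exact: lcsm_open_subspace.
- split=> [x []//|].
  have -> : [set x : set_type U0 | (S `&` U0) (val x)] = set_val @^-1` S.
    by apply/seteqP; split=> x /= => [[]//|Sx]; split=> //; exact: set_valP.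
  exact: closed_set_val_preimage (Kchart_setT_closed chart).
- exact: embedding_onS emb.
- exact (Kchart_image_open chart oU0).
Qed.

Section CoordChange.
Context {X T1 T2 : topologicalType}
  (U1 S1 : set T1) (psi1 : T1 -> X) (U2 S2 : set T2) (psi2 : T2 -> X)
  (U21 : set T1) (phi21 : T1 -> T2).
Hypothesis cc : is_coord_change U1 S1 psi1 U2 S2 psi2 U21 phi21.

Lemma coord_change_domain x y : (forall x', S1 x' -> psi1 x' = psi1 x -> x' = x) ->
  S1 x -> S2 y -> psi1 x = psi2 y -> U21 x.
Proof.
case: cc => _ _ _ _ img injx Sx Sy pxy.
have : (psi1 @` S1 `&` psi2 @` S2) (psi1 x) by split; [exists x | exists y].
by rewrite -img => -[x' [Sx' Ux'] /(injx _ Sx') <-].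
Qed.

Lemma coord_change_S x : S1 x -> U21 x -> S2 (phi21 x).
Proof.
case: cc => _ _ eqS _ _ Sx Ux.
by have : (S1 `&` U21) x by []; rewrite eqS => -[].
Qed.

Lemma coord_change_psi x : S1 x -> U21 x -> psi2 (phi21 x) = psi1 x.
Proof. by case: cc => _ _ _ eqpsi _ Sx Ux; exact: eqpsi. Qed.

Lemma coord_change_restrict (V1 : set T1) (V2 : set T2) (D : set T1) :
  open D -> D `<=` V1 `&` U21 `&` phi21 @^-1` V2 ->
  (forall x y, (S1 `&` V1) x -> (S2 `&` V2) y -> psi1 x = psi2 y -> D x) ->
  is_coord_change V1 (S1 `&` V1) psi1 V2 (S2 `&` V2) psi2 D phi21.
Proof.
move=> oD Dsub Dover; have [_ [_ emb] eqS _ _] := cc.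
have DU x : D x -> U21 x by case/Dsub => -[].
split.
- by split; [move=> x /Dsub[[]] | exact (open_set_val_preimage V1 oD)].
- by split=> [_ [x /Dsub[_] ? <-]//|]; apply: embedding_onS emb => x /Dsub[[]].
- apply/seteqP; split=> x.
  + move=> [[Sx _] Dx]; split=> //; split; first exact: coord_change_S (DU x Dx).
    by case: (Dsub x Dx).
  + move=> [Dx [S2x _]]; split=> //; split=> //; last by case: (Dsub x Dx) => -[].
    have : (U21 `&` phi21 @^-1` S2) x by split=> //; exact: DU.
    by rewrite -eqS => -[].
- by move=> x [[Sx _] Dx]; exact: coord_change_psi (DU x Dx).
- apply/seteqP; split=> [_ [x [[Sx V1x] Dx] <-]|_ [[x S1x <-] [y S2y e]]].
  + split; first by exists x.
    exists (phi21 x); last exact: coord_change_psi (DU x Dx).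
    by split; [exact: coord_change_S (DU x Dx) | case: (Dsub x Dx)].
  + by exists x => //; split=> //; exact: Dover _ _ S1x S2y (esym e).
Qed.

End CoordChange.

(* From here on implicit arguments are declared by hand: the chart indices
   [p q] must stay explicit although they occur in the types. *)
Unset Implicit Arguments.

Definition chart_overlap {X : topologicalType} {d : Order.disp_t} {P : finPOrderType d}
    {T : P -> topologicalType} (S : forall p, set (T p)) (psi : forall p, T p -> X)
    (U0 : forall p, set (T p)) (p q : P) : set (T q) :=
  S q `&` closure (U0 q) `&` psi q @^-1` (psi p @` (S p `&` closure (U0 p))).

(* No [W] on the diagonal, so that the identity coordinate change keeps the
   whole shrunken chart as its domain. *)
Definition shrunk_domain {d : Order.disp_t} {P : finPOrderType d}
    {T : P -> topologicalType} (Uc : forall p q : P, set (T q))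
    (phi : forall p q : P, T q -> T p) (U0 : forall p, set (T p))
    (W : forall p q : P, set (T q)) (p q : P) : set (T q) :=
  U0 q `&` Uc p q `&` phi p q @^-1` U0 p `&`
  (if p == q then [set: T q] else W p q).

Section Shrinking.
Context {X : topologicalType} {Z : set X} {d : Order.disp_t} {P : finPOrderType d}
  {T : P -> topologicalType} {S : forall p, set (T p)} {psi : forall p, T p -> X}
  {Uc : forall p q : P, set (T q)} {phi : forall p q : P, T q -> T p}.
Hypothesis gcs : is_weak_gcs Z (fun p => [set: T p]) S psi Uc phi.

Lemma gcs_chart p : is_Kchart [set: T p] (S p) (psi p).
Proof. by case: gcs => -[charts _] _ _ _ _; exact: charts. Qed.

Lemma gcs_coord {p q} : (q <= p)%O ->
  is_coord_change [set: T q] (S q) (psi q) [set: T p] (S p) (psi p) (Uc p q) (phi p q).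
Proof. by case: gcs => -[_ coords] _ _ _ _; exact: coords. Qed.

Lemma gcs_locally_relcompact p : locally_relcompact (T p).
Proof. by case: (gcs_chart p) => /lcsm_setT[]. Qed.

Lemma gcs_Uc_open {p q} : (q <= p)%O -> open (Uc p q).
Proof. by case/gcs_coord => -[_ /open_setT_preimage]. Qed.

Lemma gcs_overlap_domain {p q x y} : (q <= p)%O ->
  S q x -> S p y -> psi q x = psi p y -> Uc p q x.
Proof.
move=> qp Sx Sy e; apply: (coord_change_domain (gcs_coord qp) _ Sx Sy e).
by move=> x' Sx'; exact (Kchart_inj (gcs_chart q) Sx' Sx).
Qed.

Lemma shrink_charts_cover : compact Z -> exists U0 : forall p, set (T p),
  (forall p, relcompact_open [set: T p] (U0 p)) /\
  Z `<=` \bigcup_p psi p @` (S p `&` U0 p).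
Proof.
move=> cZ.
have hV p z : {V : set (T p) | relcompact_open [set: T p] V /\
                              (forall x, S p x -> psi p x = z -> V x)}.
  apply: cid; have [[x [Sx <-]]|nz] := pselect (exists x, S p x /\ psi p x = z).
    have [V Vx rcV] := gcs_locally_relcompact p [set: T p] x openT I.
    by exists V; split=> // y Sy /(Kchart_inj (gcs_chart p) Sy Sx) ->.
  by exists set0; split=> [|x Sx pxz]; [exact: relcompact_open0 | case: nz; exists x].
pose V p z := sval (hV p z).
have rcV p z : relcompact_open [set: T p] (V p z) by case: (svalP (hV p z)).
have [z|z Zz|D ZD] :=
  compact_finite_subcover cZ (f := fun z => \bigcup_p psi p @` (S p `&` V p z)).
- apply: bigcup_open => p _; apply: (Kchart_image_open (gcs_chart p)).
  by case: (rcV p z).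
- case: gcs => _ _ _ _ /(_ z Zz)[p _ [x Sx pxz]].
  exists z => //; exists p => //; exists x => //; split=> //.
  by case: (svalP (hV p z)) => _; apply.
- exists (fun p => \bigcup_(z in [set` D]) V p z); split.
    by move=> p; exact: relcompact_open_bigcup.
  move=> z /ZD[i Di [p _ [x [Sx Vx] <-]]].
  by exists p => //; exists x => //; split=> //; exists i.
Qed.

Lemma chart_overlap_nbhs (U0 : forall p, set (T p)) {p q} :
  hausdorff_space X -> (forall p, relcompact_open [set: T p] (U0 p)) -> (q <= p)%O ->
  exists2 W, chart_overlap S psi U0 p q `<=` W & relcompact_open (Uc p q) W.
Proof.
move=> hXh rcU0 qp.
have cSU0 r : compact (S r `&` closure (U0 r)).
  rewrite setIC; apply: compact_closedI; first by case: (rcU0 r).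
  exact: Kchart_setT_closed (gcs_chart r).
have psi_cont r : {within S r `&` closure (U0 r), continuous psi r}.
  by apply: continuous_subspaceW (Kchart_continuous (gcs_chart r)) => x [].
apply: compact_relcompact_open_superset.
- exact: gcs_locally_relcompact.
- rewrite /chart_overlap; apply: (compact_within_preimage (psi_cont q) (cSU0 q)).
  exact: compact_closed hXh (continuous_compact (psi_cont p) (cSU0 p)).
- exact: gcs_Uc_open.
- by move=> x [[Sx _] [y [Sy _] e]]; exact: gcs_overlap_domain qp Sx Sy (esym e).
Qed.

Section ShrunkDomain.
Context {U0 : forall p, set (T p)} {W : forall p q : P, set (T q)}.
Hypothesis rcU0 : forall p, relcompact_open [set: T p] (U0 p).
Hypothesis overlapW : forall p q, (q <= p)%O ->
  chart_overlap S psi U0 p q `<=` W p q /\ relcompact_open (Uc p q) (W p q).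

Lemma shrunk_domain_diag p : shrunk_domain Uc phi U0 W p p = U0 p.
Proof.
case: gcs => _ /(_ p)[Upp phipp] _ _ _; rewrite /shrunk_domain eqxx Upp setIT.
by apply/seteqP; split=> [x [] []//|x U0x]; split=> //=; rewrite phipp.
Qed.

Lemma shrunk_domain_open {p q} : (q <= p)%O -> open (shrunk_domain Uc phi U0 W p q).
Proof.
move=> qp; apply: openI; last first.
  by case: eqP => _; [exact: openT | case: (overlapW _ _ qp) => _ []].
rewrite -setIA; apply: openI; first by case: (rcU0 q).
apply: open_within_preimage; last by case: (rcU0 p).
- by case: (gcs_coord qp) => _ [_ []].
- exact: gcs_Uc_open.
Qed.

Lemma shrunk_domain_relcompact {p q} : (q <= p)%O ->
  relcompact_open (Uc p q) (shrunk_domain Uc phi U0 W p q).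
Proof.
move=> qp; have [<-|npq] := eqVneq p q.
  by rewrite shrunk_domain_diag; case: gcs => _ /(_ p)[-> _] _ _ _.
apply: relcompact_openS (shrunk_domain_open qp) _ (overlapW _ _ qp).2.
by rewrite /shrunk_domain (negPf npq) => x [].
Qed.

Lemma shrunk_domain_overlap {p q x y} : (q <= p)%O ->
  (S q `&` U0 q) x -> (S p `&` U0 p) y -> psi q x = psi p y ->
  shrunk_domain Uc phi U0 W p q x.
Proof.
move=> qp [Sx U0x] [Sy U0y] e.
have Ux := gcs_overlap_domain qp Sx Sy e.
have phixy : phi p q x = y.
  apply: (Kchart_inj (gcs_chart p)) => //.
    exact (coord_change_S (gcs_coord qp) Sx Ux).
  by rewrite (coord_change_psi (gcs_coord qp) Sx Ux).
split; first by split; [split | rewrite /= phixy].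
case: eqP => // _; apply: (overlapW _ _ qp).1; split.
  by split=> //; exact: subset_closure.
by exists y => //; split=> //; exact: subset_closure.
Qed.

Lemma is_weak_gcs_shrunk : Z `<=` \bigcup_p psi p @` (S p `&` U0 p) ->
  is_weak_gcs Z U0 (fun p => S p `&` U0 p) psi (shrunk_domain Uc phi U0 W) phi.
Proof.
move=> ZU0; have [_ diag cocycle comparable _] := gcs.
split=> //.
- split=> [p|p q qp].
    by apply: is_Kchart_restrict (gcs_chart p) _; case: (rcU0 p).
  apply: (coord_change_restrict (gcs_coord qp) (shrunk_domain_open qp)).
    by move=> x [].
  by move=> x y; exact: shrunk_domain_overlap.
- move=> p; split; first exact: shrunk_domain_diag.
  by move=> x _; case: (diag p) => _; apply.
- move=> p q r rq qp x [[[_ Ux] _] _] [[[_ Ux'] _] _] [[[_ Ux''] _] _].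
  exact: cocycle.
- move=> p q [_ [[x [Sx _] <-] [y [Sy _] e]]].
  by apply: comparable; exists (psi p x); split; [exists x | exists y].
Qed.

End ShrunkDomain.
End Shrinking.

Theorem proposition3p3 (X : topologicalType) (Z : set X)
  (hX : lcsm X) (hZ : compact Z)
  (d : Order.disp_t) (P : finPOrderType d)
  (T : P -> topologicalType) (S : forall p, set (T p))
  (psi : forall p, T p -> X)
  (Uc : forall p q : P, set (T q)) (phi : forall p q : P, T q -> T p) :
  is_weak_gcs Z (fun p => [set: T p]) S psi Uc phi ->
  exists (U0 : forall p, set (T p)) (D0 : forall p q : P, set (T q)),
    is_shrinking Z S psi Uc phi U0 D0.
Proof.
move=> gcs; have [_ _ /metrizable_hausdorff hXh] := hX.
have [U0 [rcU0 ZU0]] := shrink_charts_cover gcs hZ.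
have hW p q : {W : set (T q) | (q <= p)%O ->
    chart_overlap S psi U0 p q `<=` W /\ relcompact_open (Uc p q) W}.
  apply: cid; have [qp|nqp] := pselect (q <= p)%O; last by exists set0 => /nqp.
  by have [W] := chart_overlap_nbhs gcs U0 hXh rcU0 qp; exists W.
pose W p q := sval (hW p q).
have overlapW p q : (q <= p)%O ->
    chart_overlap S psi U0 p q `<=` W p q /\ relcompact_open (Uc p q) (W p q).
  exact: svalP (hW p q).
exists U0, (shrunk_domain Uc phi U0 W); split.
- by move=> p; have rc := rcU0 p; split; [case: rc | exact: relcompact_in_open].
- move=> p q qp; have rc := shrunk_domain_relcompact gcs rcU0 overlapW qp.
  by split; [case: rc | exact: relcompact_in_open].
- exact: is_weak_gcs_shrunk.
Qed.
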